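(* Let $A$ be an $m\times n$ matrix with columns $a_1,\dots,a_n$. Then $A$ is optimally sparse if and only if for every nonzero vector $x\in\mathbb{Q}^n$, $\|Ax\|_0\ge \max_{i\in\operatorname{supp}(x)}\|a_i\|_0$.
   Context: $\|v\|_0$ is the number of nonzero entries of a vector $v$; $\operatorname{supp}(x)=\{i: x_i\neq 0\}$; $\operatorname{nnz}(M)$ is the number of nonzero entries of a matrix $M$. $A$ is optimally sparse if $\operatorname{nnz}(AX)\ge\operatorname{nnz}(A)$ for every invertible $n\times n$ matrix $X$. *)

From mathcomp Require Import all_boot all_order all_algebra.
Set Implicit Arguments. Unset Strict Implicit. Unset Printing Implicit Defensive.
Import GRing.Theory.
Local Open Scope ring_scope.

Definition nnz (R : nzRingType) (p q : nat) (M : 'M[R]_(p, q)) : nat :=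
  #|[set ij : 'I_p * 'I_q | M ij.1 ij.2 != 0]|.

Definition supp (R : nzRingType) (n : nat) (x : 'cV[R]_n) : {set 'I_n} :=
  [set i | x i 0 != 0].

Definition optimally_sparse (R : comUnitRingType) (m n : nat) (A : 'M[R]_(m, n)) : Prop :=
  forall X : 'M[R]_n, X \in unitmx -> (nnz A <= nnz (A *m X))%N.

(* An invertible X has a nonzero term in its Leibniz expansion, i.e. a
   permutation s with every entry X i (s i) nonzero.  Hence column s i of X
   has i in its support, so the hypothesis bounds nnz (col i A) by
   nnz (col (s i) (A X)); summing over i gives nnz A <= nnz (A X).
   Conversely, replacing the i-th column of the identity by a vector x with
   x_i <> 0 gives an invertible X for which A X differs from A only in
   column i, which becomes A x; optimal sparsity then gives
   nnz (col i A) <= nnz (A x). *)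
From mathcomp Require Import all_boot all_order all_algebra all_fingroup.
Set Implicit Arguments. Unset Strict Implicit. Unset Printing Implicit Defensive.
Import GRing.Theory.
Local Open Scope ring_scope.

Lemma nnzE (R : nzRingType) p q (M : 'M[R]_(p, q)) :
  nnz M = (\sum_i \sum_j (M i j != 0%R : nat))%N.
Proof.
rewrite /nnz -sum1_card pair_big /= big_mkcond /=.
by apply: eq_bigr => -[i j] _; rewrite inE /=; case: (M i j != 0).
Qed.

Lemma nnz_sum_col (R : nzRingType) p q (M : 'M[R]_(p, q)) :
  nnz M = (\sum_j nnz (col j M))%N.
Proof.
rewrite nnzE exchange_big; apply: eq_bigr => j _.
by rewrite nnzE; apply: eq_bigr => i _; rewrite big_ord1 mxE.
Qed.

Lemma col_mulmx (R : nzRingType) p q r (A : 'M[R]_(p, q)) (B : 'M[R]_(q, r)) j :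
  col j (A *m B) = A *m col j B.
Proof. by rewrite !colE mulmxA. Qed.

Lemma unitmx_perm_nz (R : comUnitRingType) n (X : 'M[R]_n) :
  X \in unitmx -> exists s : 'S_n, forall i, X i (s i) != 0.
Proof.
rewrite unitmxE => detX_unit.
have /existsP[s nz_term] : [exists s : 'S_n, \prod_i X i (s i) != 0].
  apply: contraLR detX_unit; rewrite negb_exists => /forallP all0.
  rewrite /determinant big1 ?unitr0 // => s _.
  by rewrite (eqP (negbNE (all0 s))) mulr0.
exists s => i; apply: contraNneq nz_term => Xi0.
by rewrite (bigD1 i) //= Xi0 mul0r.
Qed.

Section IdmxSetcol.

Variables (R : nzRingType) (n : nat) (i : 'I_n) (x : 'cV[R]_n).

Definition idmx_setcol : 'M[R]_n :=
  \matrix_(k, j) if j == i then x k 0 else (k == j)%:R.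

Lemma col_idmx_setcol : col i idmx_setcol = x.
Proof. by apply/matrixP => k l; rewrite !mxE eqxx ord1. Qed.

Lemma col_idmx_setcol_neq j : j != i -> col j idmx_setcol = col j 1%:M.
Proof. by move=> /negbTE ji; apply/matrixP => k l; rewrite !mxE ji. Qed.

End IdmxSetcol.

Lemma idmx_setcol_unit (F : fieldType) n i (x : 'cV[F]_n) :
  x i 0 != 0 -> idmx_setcol i x \in unitmx.
Proof.
move=> xi_nz; rewrite unitmxE unitfE; apply/det0P => -[v v_nz vX0].
apply/negP: v_nz; rewrite negbK.
have vX_col j : (v *m idmx_setcol i x) 0 j = (v *m col j (idmx_setcol i x)) 0 0.
  by rewrite !mxE; apply: eq_bigr => k _; rewrite !mxE.
have v_off j : j != i -> v 0 j = 0.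
  move=> ji; have := vX_col j; rewrite vX0 col_idmx_setcol_neq // col1.
  by rewrite -colE mxE => /esym; rewrite mxE.
have v_i : v 0 i = 0.
  have := vX_col i; rewrite vX0 col_idmx_setcol !mxE (bigD1 i) //= big1.
    by move=> /esym/eqP; rewrite addr0 mulf_eq0 (negbTE xi_nz) orbF => /eqP.
  by move=> k ki; rewrite v_off ?mul0r.
by apply/eqP/rowP => j; rewrite mxE; have [->|/v_off] := eqVneq j i.
Qed.

Lemma nnz_mulmx_idmx_setcol (R : nzRingType) m n (A : 'M[R]_(m, n)) i x :
  (nnz (A *m idmx_setcol i x) + nnz (col i A) = nnz A + nnz (A *m x))%N.
Proof.
rewrite (nnz_sum_col A) (nnz_sum_col (A *m _)) (bigD1 i) //=.
rewrite [X in (_ = X + _)%N](bigD1 i) //=.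
have cols_off : (\sum_(j | j != i) nnz (col j (A *m idmx_setcol i x)) =
                 \sum_(j | j != i) nnz (col j A))%N.
  apply: eq_bigr => j ji.
  by rewrite col_mulmx col_idmx_setcol_neq // col1 -colE.
rewrite cols_off col_mulmx col_idmx_setcol.
by rewrite addnAC [RHS]addnAC (addnC (nnz (A *m x))).
Qed.

Lemma optimally_sparse_nnz_col (F : fieldType) m n (A : 'M[F]_(m, n)) x i :
  optimally_sparse A -> i \in supp x -> (nnz (col i A) <= nnz (A *m x))%N.
Proof.
rewrite inE => sparseA xi_nz.
have := sparseA _ (idmx_setcol_unit xi_nz).
by rewrite -(leq_add2r (nnz (col i A))) nnz_mulmx_idmx_setcol leq_add2l.
Qed.

Lemma nnz_col_optimally_sparse (F : fieldType) m n (A : 'M[F]_(m, n)) :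
  (forall x i, i \in supp x -> (nnz (col i A) <= nnz (A *m x))%N) ->
  optimally_sparse A.
Proof.
move=> col_le X /unitmx_perm_nz[s Xs_nz].
rewrite (nnz_sum_col A) (nnz_sum_col (A *m X)).
rewrite [X in (_ <= X)%N](reindex_inj (@perm_inj _ s)) /=.
apply: leq_sum => i _; rewrite col_mulmx.
by apply: col_le; rewrite inE mxE Xs_nz.
Qed.

Theorem mainTheorem5 (m n : nat) (A : 'M[rat]_(m, n)) :
  optimally_sparse A <->
  (forall x : 'cV[rat]_n, x != 0 ->
     (\max_(i in supp x) nnz (col i A) <= nnz (A *m x))%N).
Proof.
split=> [sparseA x _ | max_le].
  by apply/bigmax_leqP => i; apply: optimally_sparse_nnz_col.
apply: nnz_col_optimally_sparse => x i xi.
have x_nz : x != 0 by apply: contraTneq xi => ->; rewrite inE mxE eqxx.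
exact: leq_trans (leq_bigmax_cond _ xi) (max_le x x_nz).
Qed.
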